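(* In the standing setup with $A$ generic, let $g_i=B_i^{\rm T}f_0$ ($i=1,2,3$) and for $\varepsilon\ne 0$ let $\widetilde H(x,\varepsilon)=\varepsilon^{-1}x^{\rm T}J(I-\varepsilon f_0'(x))^{-1}x$ and $\widetilde K_i(x,\varepsilon)=\varepsilon^{-1}x^{\rm T}J(I-\varepsilon g_i'(x))^{-1}x$. Then $\widetilde K_1+\widetilde K_2+\widetilde K_3=\widetilde H$.
   Context: Standing setup: $J=\begin{pmatrix}0&I_3\\-I_3&0\end{pmatrix}$ ($6\times6$). $A$ is a fixed real $6\times 6$ skew-Hamiltonian matrix ($A^{\rm T}J=JA$). $H_0$ is a homogeneous cubic polynomial on $\mathbb R^6$ with $A\nabla^2H_0(x)=\nabla^2H_0(x)A^{\rm T}$ for all $x$ ($\nabla^2$ = Hesse matrix), $H_1,H_2$ homogeneous cubic polynomials with $\nabla H_1=A\nabla H_0$, $\nabla H_2=A\nabla H_1$, $f_i=J\nabla H_i$, primes denote Jacobi matrices. Genericity: the characteristic polynomial of $A$ (a square of a cubic) has three pairwise distinct roots $\lambda_1,\lambda_2,\lambda_3$, each a double eigenvalue. $B_i=\alpha_iI+\beta_iA+\gamma_iA^2$ ($i=1,2,3$), where $\alpha_i+\beta_i\lambda+\gamma_i\lambda^2$ is the unique polynomial of degree $\le2$ equal to $-1$ at $\lambda_i$ and to $1$ at the other two eigenvalues; then $B_i^2=I$ and $B_1+B_2+B_3=I$. *)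

From HB Require Import structures.
From mathcomp Require Import all_boot all_order all_algebra.
Set Implicit Arguments. Unset Strict Implicit. Unset Printing Implicit Defensive.
Import Order.TTheory GRing.Theory Num.Theory.
Local Open Scope ring_scope.

Section Defs.
Variable R : numFieldType.

Definition Jmx : 'M[R]_6 := block_mx (0 : 'M_3) 1%:M (- 1%:M) 0.

(* A homogeneous cubic polynomial on R^6 is represented by a coefficient
   tensor c: H(x) = sum_{i,j,k} c i j k x_i x_j x_k (every homogeneous cubic
   has such a representation). *)
Definition cubic := 'I_6 -> 'I_6 -> 'I_6 -> R.

Definition cubic_eval (c : cubic) (x : 'cV[R]_6) : R :=
  \sum_i \sum_j \sum_k c i j k * x i 0 * x j 0 * x k 0.

Definition cubic_grad (c : cubic) (x : 'cV[R]_6) : 'cV[R]_6 :=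
  \col_a \sum_j \sum_k (c a j k + c j a k + c j k a) * x j 0 * x k 0.

Definition cubic_hess (c : cubic) (x : 'cV[R]_6) : 'M[R]_6 :=
  \matrix_(a, b) \sum_k (c a b k + c a k b + c b a k + c k a b + c b k a + c k b a)
                        * x k 0.

Definition vf (c : cubic) (x : 'cV[R]_6) : 'cV[R]_6 := Jmx *m cubic_grad c x.
Definition vf_jac (c : cubic) (x : 'cV[R]_6) : 'M[R]_6 := Jmx *m cubic_hess c x.

(* Jacobi matrix of g = B^T f0 (B constant): B^T f0'. *)
Definition gvf_jac (B : 'M[R]_6) (c : cubic) (x : 'cV[R]_6) : 'M[R]_6 :=
  B^T *m vf_jac c x.

Definition kahan_mod (M : 'M[R]_6) (x : 'cV[R]_6) (eps : R) : R :=
  eps^-1 * (x^T *m Jmx *m invmx (1%:M - eps *: M) *m x) 0 0.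

Definition Htilde (c : cubic) (x : 'cV[R]_6) (eps : R) : R :=
  kahan_mod (vf_jac c x) x eps.
Definition Ktilde (B : 'M[R]_6) (c : cubic) (x : 'cV[R]_6) (eps : R) : R :=
  kahan_mod (gvf_jac B c x) x eps.

End Defs.

(* Since A is skew-Hamiltonian, J (A - l) is skew-symmetric, so every eigenspace
   of A has even dimension; with three distinct eigenvalues in dimension 6 this
   makes A diagonalizable, so B_i = p_i(A) is an involution, B_1 + B_2 + B_3 = I,
   B_i^T J = J B_i and B_i S = S B_i^T for the symmetric Hessian S.  For such a B,
   the resolvents Y = (I - eps B^T J S) and Z = (I - eps J S) agree on the
   (+1)-eigenspace of B^T, while J (I - B^T) intertwines Y^T with Z; together this
   makes J Y^-1 - J Z^-1 B^T skew-symmetric, so x^T J Y^-1 x = x^T J Z^-1 B^T x.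
   Summing over i turns the right-hand sides into x^T J Z^-1 x. *)

From HB Require Import structures.
From mathcomp Require Import all_boot all_order all_algebra.
From mathcomp Require Import ring.
Set Implicit Arguments. Unset Strict Implicit. Unset Printing Implicit Defensive.
Import Order.TTheory GRing.Theory Num.Theory.
Local Open Scope ring_scope.

Lemma eqrN_eq0 (R : fieldType) (a : R) : 2%:R != 0 :> R -> a = - a -> a = 0.
Proof.
move=> two_neq0 /eqP; rewrite -subr_eq0 opprK -mulr2n -mulr_natr mulf_eq0.
by rewrite (negPf two_neq0) orbF => /eqP.
Qed.

Section SkewSymmetric.

Variable R : fieldType.
Hypothesis two_neq0 : 2%:R != 0 :> R.

Lemma skew_unitmx_even n (G : 'M[R]_n) :
  G^T = - G -> G \in unitmx -> ~~ odd n.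
Proof.
move=> Gskew; rewrite unitmxE unitfE; apply: contraNN => odd_n.
apply/eqP/(eqrN_eq0 two_neq0).
by rewrite -[LHS]det_tr Gskew -scaleN1r detZ -signr_odd odd_n mulN1r.
Qed.

(* K = C G C^T with G skew-symmetric and invertible of size \rank K. *)
Lemma skew_mxrank_even n (K : 'M[R]_n) : K^T = - K -> ~~ odd (\rank K).
Proof.
move=> Kskew.
set C := col_base K; set D := row_base K.
have CTfree : row_free C^T by rewrite /row_free mxrank_tr; exact: col_base_full.
have sDCT : (D <= C^T)%MS.
  have : ((C *m D)^T <= C^T)%MS by rewrite trmx_mul submxMl.
  by rewrite mulmx_base Kskew eqmx_opp; apply: submx_trans; rewrite eq_row_base.
set G := D *m pinvmx C^T.
have CGC : C *m G *m C^T = K by rewrite -mulmxA mulmxKpV // mulmx_base.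
clearbody C G.
have cancelC X Y : C *m X *m C^T = C *m Y *m C^T -> X = Y.
  move/(row_free_inj CTfree)/(congr1 trmx); rewrite !trmx_mul.
  by move=> e; apply: trmx_inj; exact: (row_free_inj CTfree e).
have Gskew : G^T = - G.
  apply: cancelC; rewrite -[C in LHS]trmxK -!trmx_mul trmxK mulmxA CGC Kskew.
  by rewrite mulmxN mulNmx CGC.
apply: skew_unitmx_even Gskew _.
rewrite -row_free_unit; apply/eqP/anti_leq; rewrite rank_leq_row /=.
have := mxrankM_maxl (C *m G) C^T; rewrite CGC => /leq_trans; apply.
exact: mxrankM_maxr.
Qed.

End SkewSymmetric.

Section HornerMx.

Variable R : comNzRingType.

Lemma horner_mx_intertwine n (X Y M : 'M[R]_n.+1) (p : {poly R}) :
  X *m M = M *m Y -> horner_mx X p *m M = M *m horner_mx Y p.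
Proof.
move=> XMY; elim/poly_ind: p => [|p c IHp]; first by rewrite !rmorph0 mul0mx mulmx0.
rewrite !rmorphD !rmorphM /= !horner_mx_X !horner_mx_C -!mulmxE.
by rewrite mulmxDl mulmxDr -mulmxA XMY mulmxA IHp -mulmxA scalar_mxC.
Qed.

Lemma trmx_horner_mx n (X : 'M[R]_n.+1) (p : {poly R}) :
  (horner_mx X p)^T = horner_mx X^T p.
Proof.
elim/poly_ind: p => [|p c IHp]; first by rewrite !rmorph0 trmx0.
rewrite [p * 'X]mulrC !rmorphD !rmorphM /= !horner_mx_X !horner_mx_C -!mulmxE.
rewrite linearD /= trmx_mul IHp tr_scalar_mx; congr (_ + _).
exact: horner_mx_intertwine.
Qed.

End HornerMx.

Section SkewHamiltonian.

Variables (R : fieldType) (n : nat) (J A : 'M[R]_n.+1).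
Hypotheses (two_neq0 : 2%:R != 0 :> R) (Ju : J \in unitmx) (Jskew : J^T = - J).
Hypothesis skewHamA : A^T *m J = J *m A.

Lemma skewHamiltonian_eigenspace_rank_even a : ~~ odd (\rank (eigenspace A a)).
Proof.
have JAskew : (J *m (A - a%:M))^T = - (J *m (A - a%:M)).
  by rewrite trmx_mul linearB /= tr_scalar_mx Jskew mulmxN mulmxBl skewHamA
    mulmxBr scalar_mxC.
have Jfull : row_full J by rewrite row_full_unit.
have := skew_mxrank_even two_neq0 JAskew; rewrite (eqmxMfull _ Jfull).
rewrite mxrank_ker oddB ?rank_leq_row // => /negPf ->.
by rewrite (negPf (skew_unitmx_even two_neq0 Jskew Ju)).
Qed.

(* Each eigenspace has even, hence at least 2, dimension; the degree count forces
   the eigenspaces to fill the whole space. *)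
Lemma skewHamiltonian_root_prod_XsubC (rs : seq R) :
  uniq rs -> char_poly A = (\prod_(l <- rs) ('X - l%:P)) ^+ 2 ->
  horner_mx A (\prod_(l <- rs) ('X - l%:P)) = 0.
Proof.
move=> rs_uniq charA.
pose a_ (i : 'I_(size rs)) := rs`_i.
have a_inj : {in predT &, injective a_}.
  by move=> i j _ _ /eqP; rewrite nth_uniq // => /eqP /val_inj.
have charA2 : char_poly A = \prod_(l <- rs ++ rs) ('X - l%:P).
  by rewrite charA big_cat expr2.
have n_rs : n.+1 = (size rs + size rs)%N.
  by apply: succn_inj; rewrite -(size_char_poly A) charA2 size_prod_XsubC size_cat.
have rank2 i : (2 <= \rank (eigenspace A (a_ i)))%N.
  have : eigenvalue A (a_ i).
    by rewrite eigenvalue_root_char charA2 root_prod_XsubC mem_cat mem_nth.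
  rewrite /eigenvalue -mxrank_eq0.
  have := skewHamiltonian_eigenspace_rank_even (a_ i).
  by case: (\rank _) => [|[|r]].
have full : (1%:M <= \sum_(i | predT i) eigenspace A (a_ i))%MS.
  apply: submx_full; rewrite /row_full; apply/eqP/anti_leq; rewrite rank_leq_col /=.
  rewrite (mxdirectP (mxdirect_sum_eigenspace A a_inj)) /=.
  apply: (@leq_trans (\sum_(i < size rs) 2)); last exact: leq_sum.
  by rewrite sum_nat_const card_ord muln2 -addnn -n_rs.
have coprime_XsubC : {in predT &, forall i j, j != i ->
    coprimep ('X - (a_ i)%:P) ('X - (a_ j)%:P)}.
  move=> i j _ _ nji; rewrite coprimep_XsubC root_XsubC.
  by apply: contra nji => /eqP /a_inj ->.
have : (1%:M <= kermxpoly A (\prod_(i | predT i) ('X - (a_ i)%:P)))%MS.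
  rewrite (kermxpoly_prod A coprime_XsubC).
  by rewrite (eq_bigr _ (fun i _ => esym (eigenspace_poly (a_ i) A))).
by move/sub_kermxP; rewrite mul1mx (big_nth 0) big_mkord.
Qed.

Lemma skewHamiltonian_horner_mx_eq (rs : seq R) (p q : {poly R}) :
  uniq rs -> char_poly A = (\prod_(l <- rs) ('X - l%:P)) ^+ 2 ->
  {in rs, forall l, p.[l] = q.[l]} -> horner_mx A p = horner_mx A q.
Proof.
move=> rs_uniq charA pq; apply/eqP; rewrite -subr_eq0 -rmorphB.
have /dvdpP [r ->] : \prod_(l <- rs) ('X - l%:P) %| p - q.
  apply: uniq_roots_dvdp; last by rewrite uniq_rootsE.
  by apply/allP => l /pq; rewrite /root !hornerE => ->; rewrite subrr.
by rewrite rmorphM /= skewHamiltonian_root_prod_XsubC // mulr0.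
Qed.

Lemma skewHamiltonian_horner_mx p : (horner_mx A p)^T *m J = J *m horner_mx A p.
Proof. by rewrite trmx_horner_mx; apply: horner_mx_intertwine. Qed.

Lemma skewHamiltonian_horner_mx_involutive (rs : seq R) p :
  uniq rs -> char_poly A = (\prod_(l <- rs) ('X - l%:P)) ^+ 2 ->
  {in rs, forall l, p.[l] ^+ 2 = 1} -> horner_mx A p *m horner_mx A p = 1%:M.
Proof.
move=> rs_uniq charA p2; rewrite mulmxE -rmorphM -[1%:M]/(1 : 'M_n.+1).
rewrite -(rmorph1 (horner_mx A)).
by apply: (skewHamiltonian_horner_mx_eq rs_uniq charA) => l /p2; rewrite !hornerE.
Qed.

End SkewHamiltonian.

Lemma invmx_intertwine (R : comUnitRingType) n (X Y T : 'M[R]_n) :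
  X \in unitmx -> Y \in unitmx -> X *m T = T *m Y -> invmx X *m T = T *m invmx Y.
Proof.
move=> Xu Yu XTY; rewrite -[LHS]mulmx1 -(mulmxV Yu) mulmxA -[invmx X *m T *m Y]mulmxA.
by rewrite -XTY mulmxA mulVmx // mul1mx.
Qed.

Section ResolventReflection.

Variables (R : fieldType) (n : nat) (J G B : 'M[R]_n) (eps : R).
Hypotheses (two_neq0 : 2%:R != 0 :> R) (Jskew : J^T = - J) (JJ : J *m J = - 1%:M).
Hypotheses (Gsym : G^T = G) (BB : B *m B = 1%:M).
Hypotheses (BJ : B^T *m J = J *m B) (BG : B *m G = G *m B^T).

Local Notation C := (J *m G).
Local Notation Z := (1%:M - eps *: C).
Local Notation Y := (1%:M - eps *: (B^T *m C)).
(* Twice the projection onto the (-1)-eigenspace of B^T. *)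
Local Notation P := (1%:M - B^T).

Let BTBT : B^T *m B^T = 1%:M.
Proof. by rewrite -trmx_mul BB trmx1. Qed.

Let JBT : J *m B^T = B *m J.
Proof.
have JNJ : J *m - J = 1%:M by rewrite mulmxN JJ opprK.
rewrite -[LHS]mulmx1 -JNJ !mulmxA -(mulmxA J) BJ mulmxA JJ.
by rewrite mulNmx mul1mx mulNmx mulmxN opprK.
Qed.

Let BTC : B^T *m C = C *m B^T.
Proof. by rewrite mulmxA BJ -!mulmxA BG. Qed.

Let BTP : B^T *m P = - P.
Proof. by rewrite mulmxBr mulmx1 BTBT opprB. Qed.

Let PP : P *m P = 2%:R *: P.
Proof. by rewrite mulmxBl mul1mx BTP opprK -mulr2n -scaler_nat. Qed.

Let PT : P^T = 1%:M - B.
Proof. by rewrite [LHS]linearB /= trmx1 trmxK. Qed.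

Let JP : J *m P = P^T *m J.
Proof. by rewrite PT mulmxBr mulmxBl mulmx1 mul1mx JBT. Qed.

Let GP : G *m P = P^T *m G.
Proof. by rewrite PT mulmxBr mulmxBl mulmx1 mul1mx BG. Qed.

Let comm_resolvent (M N : 'M[R]_n) : comm_mx M N -> comm_mx M (1%:M - eps *: N).
Proof.
move=> MN; apply: comm_mxB; first exact: comm_mx1.
by rewrite /comm_mx -scalemxAl -scalemxAr MN.
Qed.

Let commP_Z : comm_mx P Z.
Proof.
apply/comm_mx_sym/comm_mxB; first exact: comm_mx1.
apply/comm_mx_sym/comm_resolvent.
by rewrite /comm_mx BTC.
Qed.

Let commP_Y : comm_mx P Y.
Proof.
apply/comm_mx_sym/comm_mxB; first exact: comm_mx1.
apply/comm_mx_sym/comm_resolvent.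
by rewrite /comm_mx -mulmxA -BTC.
Qed.

Let trY_JP : Y^T *m (J *m P) = J *m P *m Z.
Proof.
have -> : Y^T = 1%:M + eps *: (G *m J *m B).
  by rewrite linearB /= trmx1 linearZ /= !trmx_mul Jskew Gsym mulmxN mulNmx
    scalerN opprK trmxK.
rewrite mulmxDl mul1mx [in RHS]mulmxBr mulmx1 -scalemxAl -scalemxAr -scalerN.
congr (_ + _ *: _).
have -> : G *m J *m B *m (J *m P) = G *m P.
  by rewrite -!mulmxA (mulmxA J B) -BJ -mulmxA (mulmxA J J) JJ mulNmx mul1mx
    mulmxN BTP opprK.
by rewrite GP JP -mulmxA (mulmxA J J) JJ mulNmx mul1mx mulmxN opprK.
Qed.

Lemma resolvent_reflection_skew : Z \in unitmx -> Y \in unitmx ->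
  (J *m invmx Y - J *m invmx Z *m B^T)^T = - (J *m invmx Y - J *m invmx Z *m B^T).
Proof.
move=> Zu Yu.
have Ytu : Y^T \in unitmx by rewrite unitmx_tr.
have YiP : invmx Y *m P = P *m invmx Y.
  exact: (invmx_intertwine Yu Yu (esym commP_Y)).
have ZiP : invmx Z *m P = P *m invmx Z.
  exact: (invmx_intertwine Zu Zu (esym commP_Z)).
have YiT_JP : (invmx Y)^T *m (J *m P) = J *m P *m invmx Z.
  by rewrite trmx_inv (invmx_intertwine Ytu Zu trY_JP).
have twice_JYP : P^T *m J *m invmx Y *m P = 2%:R *: (J *m invmx Y *m P).
  by rewrite -JP -(mulmxA J P) -YiP (mulmxA J) -(mulmxA _ P) PP -scalemxAr.
have JYP_JZP : (J *m invmx Y *m P)^T = - (J *m invmx Z *m P).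
  apply: (scalerI two_neq0); rewrite -linearZ /= -twice_JYP scalerN.
  rewrite !trmx_mul trmxK Jskew mulNmx !mulmxN YiT_JP !mulmxA -JP.
  by rewrite -(mulmxA J P P) PP -scalemxAr -scalemxAl -(mulmxA J P) -ZiP (mulmxA J).
have JZP_JYP : (J *m invmx Z *m P)^T = - (J *m invmx Y *m P).
  by apply: trmx_inj; rewrite trmxK [RHS]linearN /= JYP_JZP opprK.
have QZ : comm_mx (1%:M + B^T) Z.
  apply/comm_resolvent/comm_mx_sym/comm_mxD; first exact: comm_mx1.
  exact/esym/BTC.
have YQ : Y *m (1%:M + B^T) = (1%:M + B^T) *m Z.
  rewrite QZ !mulmxBl -!scalemxAl; congr (_ - _ *: _).
  by rewrite BTC -(mulmxA C) [B^T *m _]mulmxDr mulmx1 BTBT addrC.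
have YiQ : invmx Y *m (1%:M + B^T) = invmx Z *m (1%:M + B^T).
  by rewrite (invmx_intertwine Yu Zu YQ) (invmx_intertwine Zu Zu (esym QZ)).
have YiZi_swap : invmx Y - invmx Z *m B^T = invmx Z - invmx Y *m B^T.
  move: YiQ; rewrite !mulmxDr !mulmx1 => YiQ.
  apply/eqP; rewrite -subr_eq0 opprB addrACA -opprD [_ *m B^T + _]addrC YiQ.
  by rewrite subrr.
have twice_YiZi : 2%:R *: (invmx Y - invmx Z *m B^T) = invmx Y *m P + invmx Z *m P.
  rewrite scaler_nat mulr2n {2}YiZi_swap !mulmxBr !mulmx1 addrACA [RHS]addrACA.
  by rewrite [- _ + - _]addrC.
apply: (scalerI two_neq0); rewrite -(mulmxA J (invmx Z)) -mulmxBr -linearZ /=.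
rewrite scalerN scalemxAr twice_YiZi mulmxDr linearD /= !(mulmxA J).
by rewrite JYP_JZP JZP_JYP addrC opprD.
Qed.

End ResolventReflection.

Definition quad_form (R : fieldType) n (x : 'cV[R]_n) (M : 'M[R]_n) : R :=
  (x^T *m M *m x) 0 0.

Lemma quad_formD (R : fieldType) n (x : 'cV[R]_n) (M N : 'M[R]_n) :
  quad_form x (M + N) = quad_form x M + quad_form x N.
Proof. by rewrite /quad_form mulmxDr mulmxDl mxE. Qed.

Lemma quad_formB (R : fieldType) n (x : 'cV[R]_n) (M N : 'M[R]_n) :
  quad_form x (M - N) = quad_form x M - quad_form x N.
Proof. by rewrite /quad_form mulmxBr mulmxBl mxE [(- _ : 'M_1) _ _]mxE. Qed.

Lemma quad_form_skew (R : fieldType) n (x : 'cV[R]_n) (K : 'M[R]_n) :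
  2%:R != 0 :> R -> K^T = - K -> quad_form x K = 0.
Proof.
move=> two_neq0 Kskew; apply: (eqrN_eq0 two_neq0).
have tr11 (u : 'M[R]_1) : u^T = u by rewrite [u]mx11_scalar tr_scalar_mx.
rewrite /quad_form -{1}[x^T *m K *m x]tr11 !trmx_mul trmxK mulmxA Kskew.
by rewrite mulmxN mulNmx mxE.
Qed.

Section Kahan.

Variable R : numFieldType.

Lemma two_neq0 : 2%:R != 0 :> R.
Proof. by rewrite pnatr_eq0. Qed.

Let J3 : 'M[R]_(3 + 3) := block_mx 0 1%:M (- 1%:M) 0.

Lemma Jmx_skew : (Jmx R)^T = - Jmx R.
Proof.
suff : J3^T = - J3 by [].
by rewrite tr_block_mx opp_block_mx !trmx0 linearN /= trmx1 !oppr0 opprK.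
Qed.

Lemma Jmx_sqr : Jmx R *m Jmx R = - 1%:M.
Proof.
suff : J3 *m J3 = - 1%:M by [].
rewrite mulmx_block !mul0mx !mulmx0 !mul1mx !mulmx1 !add0r !addr0.
by rewrite (scalar_mx_block 3 3) opp_block_mx !oppr0.
Qed.

Lemma Jmx_unit : Jmx R \in unitmx.
Proof.
have JNJ : Jmx R *m (- Jmx R) = 1%:M by rewrite mulmxN Jmx_sqr opprK.
by case: (mulmx1_unit JNJ).
Qed.

Lemma cubic_hess_sym (c : cubic R) x : (cubic_hess c x)^T = cubic_hess c x.
Proof.
apply/matrixP => a b; rewrite !mxE; apply: eq_bigr => k _; congr (_ * _).
ring.
Qed.

Lemma Ktilde_reflection (B : 'M[R]_6) (c : cubic R) x eps :
  B *m B = 1%:M -> B^T *m Jmx R = Jmx R *m B ->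
  B *m cubic_hess c x = cubic_hess c x *m B^T ->
  (1%:M - eps *: vf_jac c x) \in unitmx -> (1%:M - eps *: gvf_jac B c x) \in unitmx ->
  Ktilde B c x eps =
    eps^-1 * quad_form x (Jmx R *m invmx (1%:M - eps *: vf_jac c x) *m B^T).
Proof.
move=> BB BJ BS Zu Yu; rewrite /Ktilde /kahan_mod -(mulmxA x^T); congr (_ * _).
apply/eqP; rewrite -subr_eq0 -quad_formB quad_form_skew ?two_neq0 //.
exact: (resolvent_reflection_skew two_neq0 Jmx_skew Jmx_sqr (cubic_hess_sym c x)).
Qed.

End Kahan.

Theorem mainTheorem11 (R : numFieldType) (A : 'M[R]_6) (c0 c1 c2 : cubic R)
  (l1 l2 l3 : R) (p1 p2 p3 : {poly R})
  (* A skew-Hamiltonian *)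
  (hA : A^T *m Jmx R = Jmx R *m A)
  (* A Hess H0(x) = Hess H0(x) A^T *)
  (hH0 : forall x, A *m cubic_hess c0 x = cubic_hess c0 x *m A^T)
  (* grad H1 = A grad H0, grad H2 = A grad H1 *)
  (hH1 : forall x, cubic_grad c1 x = A *m cubic_grad c0 x)
  (hH2 : forall x, cubic_grad c2 x = A *m cubic_grad c1 x)
  (* genericity *)
  (hchar : char_poly A = (('X - l1%:P) * ('X - l2%:P) * ('X - l3%:P)) ^+ 2)
  (hl12 : l1 != l2) (hl13 : l1 != l3) (hl23 : l2 != l3)
  (* interpolation polynomials defining B_i = p_i(A) *)
  (hp1 : [/\ (size p1 <= 3)%N, p1.[l1] = -1, p1.[l2] = 1 & p1.[l3] = 1])
  (hp2 : [/\ (size p2 <= 3)%N, p2.[l1] = 1, p2.[l2] = -1 & p2.[l3] = 1])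
  (hp3 : [/\ (size p3 <= 3)%N, p3.[l1] = 1, p3.[l2] = 1 & p3.[l3] = -1])
  (x : 'cV[R]_6) (eps : R) (heps : eps != 0)
  (* points where all the rational functions are defined *)
  (hinvH : (1%:M - eps *: vf_jac c0 x) \in unitmx)
  (hinv1 : (1%:M - eps *: gvf_jac (horner_mx A p1) c0 x) \in unitmx)
  (hinv2 : (1%:M - eps *: gvf_jac (horner_mx A p2) c0 x) \in unitmx)
  (hinv3 : (1%:M - eps *: gvf_jac (horner_mx A p3) c0 x) \in unitmx) :
  Ktilde (horner_mx A p1) c0 x eps + Ktilde (horner_mx A p2) c0 x eps
    + Ktilde (horner_mx A p3) c0 x eps = Htilde c0 x eps.
Proof.
set B1 := horner_mx A p1; set B2 := horner_mx A p2; set B3 := horner_mx A p3.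
have rs_uniq : uniq [:: l1; l2; l3] by rewrite /= !inE negb_or hl12 hl13 hl23.
have charA : char_poly A = (\prod_(l <- [:: l1; l2; l3]) ('X - l%:P)) ^+ 2.
  by rewrite hchar !big_cons big_nil mulr1 !mulrA.
have horner_eq := skewHamiltonian_horner_mx_eq (two_neq0 R) (Jmx_unit R)
  (Jmx_skew R) hA rs_uniq charA.
have involutive := skewHamiltonian_horner_mx_involutive (two_neq0 R) (Jmx_unit R)
  (Jmx_skew R) hA rs_uniq charA.
have BJ p : (horner_mx A p)^T *m Jmx R = Jmx R *m horner_mx A p.
  exact: skewHamiltonian_horner_mx.
have BS p : horner_mx A p *m cubic_hess c0 x = cubic_hess c0 x *m (horner_mx A p)^T.
  by rewrite trmx_horner_mx; apply: horner_mx_intertwine.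
case: hp1 hp2 hp3 => [_ p1l1 p1l2 p1l3] [_ p2l1 p2l2 p2l3] [_ p3l1 p3l2 p3l3].
have [B1B1 B2B2 B3B3] : [/\ B1 *m B1 = 1%:M, B2 *m B2 = 1%:M & B3 *m B3 = 1%:M].
  by split; apply: involutive => l; rewrite !inE => /or3P [] /eqP ->;
    rewrite ?p1l1 ?p1l2 ?p1l3 ?p2l1 ?p2l2 ?p2l3 ?p3l1 ?p3l2 ?p3l3 ?sqrrN expr1n.
have Bsum : B1 + B2 + B3 = 1%:M.
  rewrite -!rmorphD -[1%:M]/(1 : 'M_6) -(rmorph1 (horner_mx A)); apply: horner_eq.
  move=> l; rewrite !inE => /or3P [] /eqP ->; rewrite !hornerE;
    rewrite ?p1l1 ?p1l2 ?p1l3 ?p2l1 ?p2l2 ?p2l3 ?p3l1 ?p3l2 ?p3l3; ring.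
rewrite (Ktilde_reflection B1B1 (BJ p1) (BS p1) hinvH hinv1).
rewrite (Ktilde_reflection B2B2 (BJ p2) (BS p2) hinvH hinv2).
rewrite (Ktilde_reflection B3B3 (BJ p3) (BS p3) hinvH hinv3).
rewrite -!mulrDr -!quad_formD -!mulmxDr -2!linearD /= Bsum.
by rewrite trmx1 mulmx1 /Htilde /kahan_mod -(mulmxA x^T).
Qed.
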